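(* Let $S$ be a basis of $\mathcal{M}$ with $\det(V_SV_S^\top)>0$ and let $C$ be a minimal $f$-violating cycle in $G(S)$. Then $C$ contains at most one arc of type $\mathrm{II}$.
   Context: Let $v_1,\ldots,v_n\in\mathbb{R}^d$ and $\mathcal{M}=([n],\mathcal{I})$ a matroid; a basis is an independent set of maximum size. For $S\subseteq[n]$, $V_S$ is the $d\times|S|$ matrix with columns $v_i$, $i\in S$; elements are identified with their vectors, and $S-v+u=(S\setminus\{v\})\cup\{u\}$. For a basis $S$ with $\det(V_SV_S^\top)>0$ put $\langle u,v\rangle_S=u^\top(V_SV_S^\top)^{-1}v$, $\|u\|_S^2=\langle u,u\rangle_S$. The exchange graph $G(S)$ is the directed bipartite multigraph on $[n]$ with parts $S$ and $[n]\setminus S$: for $v\in S$, $u\notin S$ there is a backward arc $v\to u$ of weight $0$ whenever $S-v+u\in\mathcal{I}$; for $u\notin S$, $v\in S$ with $S-v+u$ spanning $\mathbb{R}^d$ there are two forward arcs, of type $\mathrm{I}$: $u\xrightarrow{\mathrm{I}}v$ with weight $-\log|\langle u,v\rangle_S|$, and of type $\mathrm{II}$: $u\xrightarrow{\mathrm{II}}v$ with weight $-\log\sqrt{(1+\|u\|_S^2)(1-\|v\|_S^2)}$ (with $-\log 0=+\infty$). For a directed cycle $C$ in $G(S)$, $|C|$ is its number of arcs, $\mathrm{ver}(C)$ its vertex set, and $w(C)$ the sum of its arc weights. Let $f(1)=2$ and $f(i)=(i!)^{11}$ for $i\geq 2$. A cycle $C$ is $f$-violating if $w(C)<-\log f(|C|/2)$;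 it is minimal $f$-violating if it is $f$-violating and no cycle $C'$ in $G(S)$ with $\mathrm{ver}(C')\subsetneq\mathrm{ver}(C)$ is $f$-violating. *)

From HB Require Import structures.
From mathcomp Require Import all_boot all_order all_algebra.
From mathcomp Require Import reals ereal sequences exp.
Set Implicit Arguments. Unset Strict Implicit. Unset Printing Implicit Defensive.
Import Order.TTheory GRing.Theory Num.Theory.
Local Open Scope ring_scope.

Definition is_matroid (n : nat) (indep : {set 'I_n} -> bool) : Prop :=
  [/\ indep set0,
      (forall A B : {set 'I_n}, A \subset B -> indep B -> indep A) &
      (forall A B : {set 'I_n}, indep A -> indep B -> (#|A| < #|B|)%N ->
         exists2 x, x \in B :\: A & indep (x |: A))].

Definition is_basis (n : nat) (indep : {set 'I_n} -> bool) (S : {set 'I_n}) : Prop :=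
  indep S /\ forall T : {set 'I_n}, indep T -> (#|T| <= #|S|)%N.

Section Exchange.
Variables (R : realType) (d n : nat) (v : 'I_n -> 'cV[R]_d)
          (indep : {set 'I_n} -> bool) (S : {set 'I_n}).

Definition Vmat (T : {set 'I_n}) : 'M[R]_(d, #|T|) :=
  \matrix_(r < d, j < #|T|) v (enum_val j) r ord0.

Definition gram : 'M[R]_d := Vmat S *m (Vmat S)^T.

Definition ipS (x y : 'cV[R]_d) : R := (x^T *m invmx gram *m y) ord0 ord0.
Definition nrm2S (x : 'cV[R]_d) : R := ipS x x.

Definition exch (a b : 'I_n) : {set 'I_n} := b |: (S :\ a).

Definition spans (T : {set 'I_n}) : bool := \rank (Vmat T) == d.

Definition neglog (x : R) : \bar R := if x <= 0 then +oo%E else (- ln x)%:E.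

Inductive earc : Type :=
  | Back of 'I_n & 'I_n      (* Back a b  : a -> b,  a in S, b notin S *)
  | FwdI of 'I_n & 'I_n      (* FwdI b a  : b -I-> a, b notin S, a in S *)
  | FwdII of 'I_n & 'I_n.    (* FwdII b a : b -II-> a *)

Definition src (e : earc) : 'I_n :=
  match e with Back a _ => a | FwdI b _ => b | FwdII b _ => b end.
Definition tgt (e : earc) : 'I_n :=
  match e with Back _ b => b | FwdI _ a => a | FwdII _ a => a end.

Definition is_typeII (e : earc) : bool :=
  match e with FwdII _ _ => true | _ => false end.

Definition arc_in_G (e : earc) : bool :=
  match e with
  | Back a b => [&& a \in S, b \notin S & indep (exch a b)]
  | FwdI b a => [&& b \notin S, a \in S & spans (exch a b)]
  | FwdII b a => [&& b \notin S, a \in S & spans (exch a b)]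
  end.

Definition arc_weight (e : earc) : \bar R :=
  match e with
  | Back _ _ => 0%E
  | FwdI b a => neglog `|ipS (v b) (v a)|
  | FwdII b a => neglog (Num.sqrt ((1 + nrm2S (v b)) * (1 - nrm2S (v a))))
  end.

Definition consecutive : rel earc := fun e1 e2 => tgt e1 == src e2.

Definition is_cycle (c : seq earc) : bool :=
  [&& (0 < size c)%N, all arc_in_G c, cycle consecutive c & uniq (map src c)].

Definition ver (c : seq earc) : {set 'I_n} := [set x | x \in map src c].

Definition cweight (c : seq earc) : \bar R := (\sum_(e <- c) arc_weight e)%E.

Definition fval (i : nat) : R := if i == 1%N then 2 else ((i`!) ^ 11)%:R.

(* |C|/2 : cycles in the bipartite graph G(S) have even length *)
Definition f_violating (c : seq earc) : Prop :=
  is_cycle c /\ (cweight c < (- ln (fval (size c)./2))%:E)%E.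

Definition min_f_violating (c : seq earc) : Prop :=
  f_violating c /\
  forall c' : seq earc, is_cycle c' -> ver c' \proper ver c -> not (f_violating c').

End Exchange.

From HB Require Import structures.
From mathcomp Require Import all_boot all_order all_algebra.
From mathcomp Require Import reals ereal sequences exp.
Import Order.TTheory GRing.Theory Num.Theory.
Local Open Scope ring_scope.
Set Implicit Arguments. Unset Strict Implicit. Unset Printing Implicit Defensive.

(* Suppose C contains two type II arcs u1 -> w1 and u2 -> w2, so that
   C = u1 -> w1 ~P~> u2 -> w2 ~Q~> u1.  Since w(C) is finite, ||w_i||_S <> 1,
   which is exactly what makes S - w_i + u spanning for every u; hence
   C1 = u1 -> w2 ~Q~> u1 and C2 = u2 -> w1 ~P~> u2 are cycles of G(S) on
   strictly fewer vertices.  The weight of a type II arc u -> w splits as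
   a(u) + b(w), so w(C) = w(C1) + w(C2).  By minimality neither C1 nor C2 is
   f-violating, and f(a) f(b) <= f(a + b) then forces
   w(C) >= -log f(|C|/2), a contradiction. *)

Section GramMatrix.
Variables (R : realType) (d n : nat) (v : 'I_n -> 'cV[R]_d) (S : {set 'I_n}).

Lemma gramE : gram v S = \sum_(i in S) v i *m (v i)^T.
Proof.
apply/matrixP => r c; rewrite summxE !mxE [RHS](big_enum_val (A := mem S)).
by apply: eq_bigr => j _; rewrite !mxE big_ord1 !mxE.
Qed.

Lemma col_Vmat (T : {set 'I_n}) j : col j (Vmat v T) = v (enum_val j).
Proof. by apply/matrixP => r c; rewrite !mxE (ord1 c). Qed.

Lemma not_spans_annihilator (T : {set 'I_n}) : ~~ spans v T ->
  exists2 y : 'rV[R]_d, y != 0 & {in T, forall i, y *m v i = 0}.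
Proof.
move=> nspansT; set K := kermx (Vmat v T).
have K_neq0 : K != 0.
  rewrite -mxrank_eq0 mxrank_ker subn_eq0 -ltnNge ltn_neqAle.
  by rewrite nspansT rank_leq_row.
have [i Ki_neq0 | Krows0] := pickP (fun i => row i K != 0); last first.
  case/eqP: K_neq0; apply/row_matrixP => i; rewrite row0.
  by move/negbFE: (Krows0 i) => /eqP.
exists (row i K) => // j Tj.
have KV0 : row i K *m Vmat v T = 0 by rewrite -row_mul mulmx_ker row0.
have := congr1 (col (enum_rank_in Tj j)) KV0.
by rewrite col0 colE -mulmxA -colE col_Vmat enum_rankK_in.
Qed.

Lemma mulmx_trmx_ge0 m (u : 'rV[R]_m) : 0 <= (u *m u^T) 0 0.
Proof. by rewrite mxE; apply: sumr_ge0 => k _; rewrite !mxE -expr2 sqr_ge0. Qed.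

Hypothesis gram_unit : gram v S \in unitmx.

Lemma nrm2S_ge0 x : 0 <= nrm2S v S x.
Proof.
rewrite /nrm2S /ipS; set G := gram v S; set z := invmx G *m x.
have G_sym : G^T = G by rewrite /G /gram trmx_mul trmxK.
have -> : x^T *m invmx G *m x = z^T *m G *m z.
  by rewrite -mulmxA -/z -{1}(mulKVmx gram_unit x) -/z trmx_mul G_sym.
clearbody z; rewrite /G gramE mulmx_sumr mulmx_suml summxE.
apply: sumr_ge0 => i _.
have -> : z^T *m (v i *m (v i)^T) *m z = (z^T *m v i) *m (z^T *m v i)^T.
  by rewrite trmx_mul trmxK !mulmxA.
exact: mulmx_trmx_ge0.
Qed.

(* y kills gram v S up to its term v a (v a)^T, so
   y = (y v a) (v a)^T (gram v S)^-1; multiplying by v a gives ||v a||_S = 1. *)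
Lemma nrm2S_eq1 a (y : 'rV[R]_d) : a \in S -> y != 0 ->
  {in S :\ a, forall i, y *m v i = 0} -> nrm2S v S (v a) = 1.
Proof.
move=> Sa y_neq0 y_ann; set G := gram v S; set c := y *m v a.
have yG : y *m G = c *m (v a)^T.
  rewrite /G gramE mulmx_sumr (bigD1 a) //= big1 ?addr0 ?mulmxA //.
  move=> i /andP[Si ia].
  by rewrite mulmxA y_ann ?mul0mx // !inE ia.
have c00_neq0 : c 0 0 != 0.
  apply: contraNneq y_neq0 => c00; rewrite -(mulmxK gram_unit y) -/G yG.
  have -> : c = 0 by apply/matrixP => i j; rewrite (ord1 i) (ord1 j) c00 mxE.
  by rewrite !mul0mx.
have c_fix : c = c *m ((v a)^T *m invmx G *m v a).
  by rewrite {1}/c -(mulmxK gram_unit y) -/G yG !mulmxA.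
have := congr1 (fun M : 'M[R]_1 => M 0 0) c_fix => /=.
rewrite [in RHS]mxE big_ord1 => /esym/eqP.
by rewrite -{2}(mulr1 (c 0 0)) (inj_eq (mulfI c00_neq0)) => /eqP.
Qed.

Lemma spans_exch a b : a \in S -> nrm2S v S (v a) != 1 -> spans v (exch S a b).
Proof.
move=> Sa; apply: contraNT => nspans; apply/eqP.
have [y y_neq0 y_ann] := not_spans_annihilator nspans.
apply: (nrm2S_eq1 Sa y_neq0) => i Si.
by apply: y_ann; rewrite /exch inE Si orbT.
Qed.

End GramMatrix.

Section NegLog.
Variable R : realType.
Local Open Scope ereal_scope.

Lemma neglog_neq_ninfty (x : R) : neglog x != -oo.
Proof. by rewrite /neglog; case: ifP. Qed.

Lemma neglogE (x : R) : (0 < x)%R -> neglog x = (- ln x)%:E.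
Proof. by move=> x_gt0; rewrite /neglog lt_geF. Qed.

Lemma neglog_le0 (x : R) : (x <= 0)%R -> neglog x = +oo.
Proof. by move=> x_le0; rewrite /neglog x_le0. Qed.

Lemma neglog_sqrtM_swap (p1 p2 q1 q2 : R) : (0 < p1)%R -> (0 < p2)%R ->
  neglog (Num.sqrt (p1 * q1)) + neglog (Num.sqrt (p2 * q2)) =
  neglog (Num.sqrt (p1 * q2)) + neglog (Num.sqrt (p2 * q1)).
Proof.
move=> p1_gt0 p2_gt0.
have neglog_q_le0 (p q : R) :
    (0 < p)%R -> (q <= 0)%R -> neglog (Num.sqrt (p * q)) = +oo.
  by move=> p_gt0 q_le0; rewrite neglog_le0 // ler0_sqrtr // pmulr_rle0.
have [q1_le0 | q1_gt0] := lerP q1 0.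
  rewrite !(neglog_q_le0 _ q1) // addye ?neglog_neq_ninfty //.
  by rewrite addey ?neglog_neq_ninfty.
have [q2_le0 | q2_gt0] := lerP q2 0.
  rewrite !(neglog_q_le0 _ q2) // addey ?neglog_neq_ninfty //.
  by rewrite addye ?neglog_neq_ninfty.
rewrite !neglogE ?sqrtr_gt0 ?mulr_gt0 // -!EFinD -!opprD.
rewrite -!lnM ?posrE ?sqrtr_gt0 ?mulr_gt0 // -!sqrtrM ?mulr_ge0 ?ltW //.
by rewrite mulrACA [(q1 * _)%R]mulrC [in RHS]mulrACA.
Qed.

End NegLog.

Definition fnat (i : nat) : nat := if i == 1%N then 2%N else (i`! ^ 11)%N.

Lemma fvalE (R : realType) i : fval R i = (fnat i)%:R.
Proof. by rewrite /fval /fnat; case: eqP. Qed.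

Lemma fnat_gt0 i : (0 < fnat i)%N.
Proof. by rewrite /fnat; case: eqP => // _; rewrite expn_gt0 fact_gt0. Qed.

Lemma leq_mul_fact a b : (a`! * b`! <= (a + b)`!)%N.
Proof.
have := bin_fact (leq_addr b a); rewrite addKn => <-.
by rewrite leq_pmull // bin_gt0 leq_addr.
Qed.

Lemma fnat_double b : (2 * fnat b.+2 <= fnat b.+3)%N.
Proof.
rewrite /fnat /= (factS b.+2) expnMn leq_mul2r; apply/orP; right.
by rewrite (leq_trans _ (leq_pexp2l _ (isT : (0 < 11)%N))) ?expn1.
Qed.

Lemma fnat_supermul a b : (fnat a * fnat b <= fnat (a + b))%N.
Proof.
case: a => [|[|a]]; first by rewrite /fnat /= mul1n.
- case: b => [|[|b]]; first by rewrite /fnat /= muln1.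
  + by [].
  + by rewrite add1n fnat_double.
- case: b => [|[|b]]; first by rewrite /fnat /= muln1 addn0.
  + by rewrite mulnC addn1 fnat_double.
  + rewrite /fnat /= addnS addSn /= -expnMn leq_exp2r //.
    by apply: leq_trans (leq_mul_fact _ _) _; rewrite !addnS !addSn.
Qed.

Lemma leq_fnat : {homo fnat : a b / (a <= b)%N}.
Proof.
move=> a b le_ab; rewrite -(subnKC le_ab).
by apply: leq_trans (fnat_supermul _ _); rewrite leq_pmulr ?fnat_gt0.
Qed.

Lemma ln_fval_superadd (R : realType) k1 k2 k : (k1 + k2 <= k)%N ->
  ln (fval R k1) + ln (fval R k2) <= ln (fval R k).
Proof.
move=> le_k; rewrite !fvalE -lnM ?posrE ?ltr0n ?fnat_gt0 // -natrM.
rewrite ler_ln ?posrE ?ltr0n ?muln_gt0 ?fnat_gt0 // ler_nat.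
by rewrite (leq_trans (fnat_supermul _ _)) // leq_fnat.
Qed.

Lemma split_count_gt0 (T : Type) (p : pred T) (s : seq T) : (0 < count p s)%N ->
  exists A x B, s = A ++ x :: B /\ p x.
Proof.
elim: s => //= z s IH; case pz: (p z) => cnt; first by exists [::], z, s.
have [A [x [B [-> px]]]] := IH cnt.
by exists (z :: A), x, B.
Qed.

Lemma split_count_gt1 (T : Type) (p : pred T) (s : seq T) : (1 < count p s)%N ->
  exists A x B y D, s = A ++ x :: B ++ y :: D /\ p x /\ p y.
Proof.
elim: s => //= z s IH; case pz: (p z) => cnt.
  have [B [y [D [-> py]]]] := split_count_gt0 (cnt : (0 < count p s)%N).
  by exists [::], z, B, y, D.
have [A [x [B [y [D [-> [px py]]]]]]] := IH cnt.
by exists (z :: A), x, B, y, D.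
Qed.

Section Cycles.
Variables (R : realType) (d n : nat) (v : 'I_n -> 'cV[R]_d)
          (indep : {set 'I_n} -> bool) (S : {set 'I_n}).
Implicit Types (A X P Q c : seq (earc n)).

Lemma is_cycle_catC A X :
  is_cycle v indep S (A ++ X) = is_cycle v indep S (X ++ A).
Proof.
rewrite /is_cycle !size_cat !all_cat !map_cat -rot_size_cat rot_cycle.
by congr [&& _, _, _ & _]; rewrite 1?addnC 1?andbC 1?uniq_catC.
Qed.

Lemma ver_catC A X : ver (A ++ X) = ver (X ++ A).
Proof. by apply/setP => z; rewrite !in_set !map_cat !mem_cat orbC. Qed.

Lemma cweight_catC A X : cweight v S (A ++ X) = cweight v S (X ++ A).
Proof. by rewrite /cweight !big_cat; exact: addeC. Qed.

Lemma min_f_violating_catC A X :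
  min_f_violating v indep S (A ++ X) -> min_f_violating v indep S (X ++ A).
Proof.
rewrite /min_f_violating /f_violating is_cycle_catC cweight_catC ver_catC.
by rewrite size_cat addnC -size_cat.
Qed.

Lemma cweight_neq_ninfty c : cweight v S c != -oo%E.
Proof.
rewrite /cweight; elim: c => [|e c IH]; rewrite ?big_nil ?big_cons //.
rewrite adde_eq_ninfty negb_or IH andbT.
by case: e => ? ? /=; rewrite ?neglog_neq_ninfty.
Qed.

Lemma head_typeII_nrm2S_neq1 u w c x :
  (cweight v S (FwdII u w :: c) < x%:E)%E -> nrm2S v S (v w) != 1.
Proof.
apply: contraTneq => nrm_w; rewrite -leNgt /cweight big_cons /= nrm_w.
by rewrite subrr mulr0 sqrtr0 neglog_le0 // addye ?cweight_neq_ninfty ?leey.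
Qed.

Lemma path_rcons_ends (x x' y y' : earc n) s : tgt x = tgt x' -> src y = src y' ->
  path (@consecutive n) x (rcons s y) = path (@consecutive n) x' (rcons s y').
Proof.
move=> + ysrc; elim: s x x' => [|z s IH] x x' xtgt /=; rewrite /consecutive.
  by rewrite xtgt ysrc.
by rewrite xtgt (IH z z).
Qed.

Hypothesis gram_unit : gram v S \in unitmx.

Lemma is_cycle_shortcut u1 w1 u2 w2 P Q :
  is_cycle v indep S (FwdII u1 w1 :: P ++ FwdII u2 w2 :: Q) ->
  nrm2S v S (v w2) != 1 ->
  is_cycle v indep S (FwdII u1 w2 :: Q) /\
  ver (FwdII u1 w2 :: Q) \proper ver (FwdII u1 w1 :: P ++ FwdII u2 w2 :: Q).
Proof.
case/and4P=> _ /=; rewrite all_cat /=.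
case/and3P=> /and3P[u1S _ _] _ /andP[/and3P[_ w2S _] allQ].
rewrite rcons_cat cat_path /= => /and3P[_ _ pathQ].
rewrite map_cat /= cat_uniq /= !negb_or mem_cat in_cons !negb_or.
case/and5P=> /and3P[_ u1u2 u1Q] _ /andP[_ _] u2Q uniqQ nrm_w2.
split.
  rewrite /is_cycle /= u1S w2S spans_exch // allQ u1Q uniqQ /= !andbT.
  by rewrite (@path_rcons_ends _ (FwdII u2 w2) _ (FwdII u1 w1)).
apply/properP; split.
  apply/subsetP => x; rewrite /ver !in_set !map_cons map_cat map_cons.
  rewrite !in_cons mem_cat in_cons.
  by case/orP=> ->; rewrite ?orbT.
exists u2.
  by rewrite /ver in_set map_cons in_cons map_cat mem_cat map_cons in_cons eqxx !orbT.
by rewrite /ver in_set map_cons in_cons negb_or eq_sym u1u2.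
Qed.

Lemma cweight_shortcuts u1 w1 u2 w2 P Q :
  cweight v S (FwdII u1 w1 :: P ++ FwdII u2 w2 :: Q) =
  (cweight v S (FwdII u1 w2 :: Q) + cweight v S (FwdII u2 w1 :: P))%E.
Proof.
have p_gt0 u : 0 < 1 + nrm2S v S (v u).
  by rewrite (lt_le_trans ltr01) // lerDl nrm2S_ge0.
have swap := neglog_sqrtM_swap (1 - nrm2S v S (v w1)) (1 - nrm2S v S (v w2))
  (p_gt0 u1) (p_gt0 u2).
rewrite /cweight !big_cons big_cat big_cons /=.
rewrite addeACA -swap -addeA; congr (_ + _)%E.
by rewrite [LHS]addeCA; congr (_ + _)%E; exact: addeC.
Qed.

Lemma min_f_violating_no_two_typeII u1 w1 u2 w2 P Q :
  ~ min_f_violating v indep S (FwdII u1 w1 :: P ++ FwdII u2 w2 :: Q).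
Proof.
set C := FwdII u1 w1 :: P ++ FwdII u2 w2 :: Q.
have rotC : FwdII u2 w2 :: Q ++ FwdII u1 w1 :: P =
            (FwdII u2 w2 :: Q) ++ (FwdII u1 w1 :: P) by [].
case=> [[cycC wC] minC].
have cycC' : is_cycle v indep S (FwdII u2 w2 :: Q ++ FwdII u1 w1 :: P).
  by rewrite rotC -is_cycle_catC.
have wC' : (cweight v S (FwdII u2 w2 :: Q ++ FwdII u1 w1 :: P) <
            (- ln (fval R (size C)./2))%:E)%E by rewrite rotC -cweight_catC.
have [cyc1 sub1] := is_cycle_shortcut cycC (head_typeII_nrm2S_neq1 wC').
have [cyc2] := is_cycle_shortcut cycC' (head_typeII_nrm2S_neq1 wC).
rewrite rotC -ver_catC => sub2.
have not_violating c : is_cycle v indep S c -> ver c \proper ver C ->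
    ((- ln (fval R (size c)./2))%:E <= cweight v S c)%E.
  move=> cyc sub; rewrite leNgt; apply/negP => lt.
  exact: minC cyc sub (conj cyc lt).
move: wC; rewrite cweight_shortcuts; apply/negP; rewrite -leNgt.
apply: le_trans (leeD (not_violating _ cyc1 sub1) (not_violating _ cyc2 sub2)).
rewrite -EFinD lee_fin -opprD lerN2 ln_fval_superadd //.
have sizeC : size C = (size (FwdII u1 w2 :: Q) + size (FwdII u2 w1 :: P))%N.
  by rewrite /= size_cat addnS addSn addnC.
by rewrite sizeC halfD leq_addl.
Qed.

End Cycles.

Theorem mainTheorem5 (R : realType) (d n : nat) (v : 'I_n -> 'cV[R]_d)
  (indep : {set 'I_n} -> bool) (S : {set 'I_n}) (C : seq (earc n)) :
  is_matroid indep ->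
  is_basis indep S ->
  0 < \det (gram v S) ->
  min_f_violating v indep S C ->
  (count (@is_typeII n) C <= 1)%N.
Proof.
move=> _ _ det_gt0 minC.
have gram_unit : gram v S \in unitmx by rewrite unitmxE unitfE gt_eqF.
rewrite leqNgt; apply/negP => /split_count_gt1 [A [x [B [y [D [CE [x2 y2]]]]]]].
case: x x2 CE => // u1 w1 _; case: y y2 => // u2 w2 _ CE.
have rotC : FwdII u1 w1 :: B ++ FwdII u2 w2 :: D ++ A =
            (FwdII u1 w1 :: B ++ FwdII u2 w2 :: D) ++ A by rewrite /= -catA.
move: minC; rewrite CE => /min_f_violating_catC; rewrite -rotC.
exact: (min_f_violating_no_two_typeII (indep := indep) gram_unit).
Qed.
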